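(* Let $\Sigma$ be a symmetric invertible $p\times p$ matrix, $\mathbf b\in\mathbb R^p$, $\boldsymbol\theta=\Sigma^{-1}\mathbf b$, let $\hat S_n$ be any $p\times p$ matrix and $\hat{\mathbf b}\in\mathbb R^p$, and let $\lambda\ge|\boldsymbol\theta|_1|\hat S_n-\Sigma|_\infty+|\hat{\mathbf b}-\mathbf b|_\infty$. Then $|\hat S_n\boldsymbol\theta-\hat{\mathbf b}|_\infty\le\lambda$, and every solution $\hat{\boldsymbol\theta}$ of $\min_{\boldsymbol\eta\in\mathbb R^p}\{|\boldsymbol\eta|_1:|\hat S_n\boldsymbol\eta-\hat{\mathbf b}|_\infty\le\lambda\}$ satisfies, for all $1\le w\le\infty$, $$|\hat{\boldsymbol\theta}-\boldsymbol\theta|_w\le\big[6D(5\lambda|\Sigma^{-1}|_{L^1})\big]^{1/w}\big(2\lambda|\Sigma^{-1}|_{L^1}\big)^{1-1/w}.$$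
   Context: $|M|_\infty=\max_{j,k}|m_{jk}|$ for a matrix $M$; $|M|_{L^1}=\max_k\sum_j|m_{jk}|$; $|\mathbf a|_w=(\sum_j|a_j|^w)^{1/w}$, $|\mathbf a|_\infty=\max_j|a_j|$; $D(u)=\sum_{j=1}^p(|\theta_j|\wedge u)$ for $u\ge0$. *)

From Stdlib Require Import Reals Lra.
Open Scope R_scope.

(* Vectors in R^p are functions nat -> R (only indices 0..p-1 matter);
   p x p matrices are functions nat -> nat -> R (row index first). *)

Fixpoint sumR (n : nat) (f : nat -> R) : R :=
  match n with O => 0 | S k => sumR k f + f k end.

(* max_{i < n} f i, with value 0 on the empty range (used only for
   nonnegative quantities). *)
Fixpoint maxR (n : nat) (f : nat -> R) : R :=
  match n with O => 0 | S k => Rmax (maxR k f) (f k) end.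

(* Real power x^y for x >= 0 with the conventions 0^y = 0 (y > 0), 0^0 = 1. *)
Definition rpow (x y : R) : R :=
  if Req_EM_T x 0 then (if Req_EM_T y 0 then 1 else 0) else Rpower x y.

Definition matvec (p : nat) (M : nat -> nat -> R) (v : nat -> R) : nat -> R :=
  fun j => sumR p (fun k => M j k * v k).
Definition matmul (p : nat) (A B : nat -> nat -> R) : nat -> nat -> R :=
  fun i j => sumR p (fun k => A i k * B k j).
Definition idm (i j : nat) : R := if Nat.eqb i j then 1 else 0.

Definition mx_inf (p : nat) (M : nat -> nat -> R) : R :=
  maxR p (fun j => maxR p (fun k => Rabs (M j k))).
Definition mx_L1 (p : nat) (M : nat -> nat -> R) : R :=
  maxR p (fun k => sumR p (fun j => Rabs (M j k))).
Definition vnorm (p : nat) (w : R) (a : nat -> R) : R :=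
  rpow (sumR p (fun j => rpow (Rabs (a j)) w)) (/ w).
Definition vnorm1 (p : nat) (a : nat -> R) : R := sumR p (fun j => Rabs (a j)).
Definition vnorm_inf (p : nat) (a : nat -> R) : R := maxR p (fun j => Rabs (a j)).

Definition Dfun (p : nat) (theta : nat -> R) (u : R) : R :=
  sumR p (fun j => Rmin (Rabs (theta j)) u).

Definition vsub (a b : nat -> R) : nat -> R := fun j => a j - b j.
Definition msub (A B : nat -> nat -> R) : nat -> nat -> R := fun i j => A i j - B i j.

Definition feasible (p : nat) (S : nat -> nat -> R) (bh : nat -> R) (lam : R)
  (eta : nat -> R) : Prop :=
  vnorm_inf p (vsub (matvec p S eta) bh) <= lam.

Definition is_solution (p : nat) (S : nat -> nat -> R) (bh : nat -> R) (lam : R)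
  (thh : nat -> R) : Prop :=
  feasible p S bh lam thh /\
  forall eta, feasible p S bh lam eta -> vnorm1 p thh <= vnorm1 p eta.

(* Write h = thh - theta.  Both thh and theta are feasible, so
   |Sigma h|_inf <= 2 lam (the perturbation of the constraint costs at most
   |theta|_1 |Shat - Sigma|_inf + |bhat - b|_inf <= lam, using
   |thh|_1 <= |theta|_1), and h = Sigma^-1 (Sigma h) gives
   |h|_inf <= 2 lam |Sigma^-1|_{L^1}.  Minimality of |thh|_1 confines h to
   the cone where |h|_1 <= 2 D(u) whenever |h|_inf <= u, and the
   interpolation |h|_w^w <= |h|_1 |h|_inf^(w-1) finishes the proof. *)

From Stdlib Require Import Reals Lra Lia.
Open Scope R_scope.

Lemma sumR_ext n f g : (forall i, (i < n)%nat -> f i = g i) -> sumR n f = sumR n g.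
Proof.
  induction n as [|n IH]; intros H; simpl; [reflexivity|].
  rewrite IH, (H n); [reflexivity|lia|intros; apply H; lia].
Qed.

Lemma sumR_le n f g : (forall i, (i < n)%nat -> f i <= g i) -> sumR n f <= sumR n g.
Proof.
  induction n as [|n IH]; intros H; simpl; [lra|].
  apply Rplus_le_compat; [apply IH; intros; apply H|apply H]; lia.
Qed.

Lemma sumR_add n f g : sumR n (fun i => f i + g i) = sumR n f + sumR n g.
Proof. induction n; simpl; [ring|]. rewrite IHn; ring. Qed.

Lemma sumR_sub n f g : sumR n (fun i => f i - g i) = sumR n f - sumR n g.
Proof. induction n; simpl; [ring|]. rewrite IHn; ring. Qed.

Lemma sumR_scal_l n c f : sumR n (fun i => c * f i) = c * sumR n f.
Proof. induction n; simpl; [ring|]. rewrite IHn; ring. Qed.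

Lemma sumR_scal_r n c f : sumR n (fun i => f i * c) = sumR n f * c.
Proof. induction n; simpl; [ring|]. rewrite IHn; ring. Qed.

Lemma sumR_0 n : sumR n (fun _ => 0) = 0.
Proof. induction n; simpl; [ring|]. rewrite IHn; ring. Qed.

Lemma sumR_swap n m f :
  sumR n (fun i => sumR m (fun j => f i j)) = sumR m (fun j => sumR n (fun i => f i j)).
Proof.
  induction n; simpl; [symmetry; apply sumR_0|].
  rewrite IHn, sumR_add; reflexivity.
Qed.

Lemma Rabs_sumR n f : Rabs (sumR n f) <= sumR n (fun i => Rabs (f i)).
Proof.
  induction n; simpl; [rewrite Rabs_R0; lra|].
  eapply Rle_trans; [apply Rabs_triang|lra].
Qed.

Lemma sumR_ge0 n f : (forall i, (i < n)%nat -> 0 <= f i) -> 0 <= sumR n f.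
Proof. intros H. rewrite <- (sumR_0 n). apply sumR_le, H. Qed.

Lemma maxR_ge0 n f : 0 <= maxR n f.
Proof. induction n; simpl; [lra|]. eapply Rle_trans; [apply IHn|apply Rmax_l]. Qed.

Lemma le_maxR n f i : (i < n)%nat -> f i <= maxR n f.
Proof.
  induction n as [|n IH]; intros Hi; simpl; [lia|].
  destruct (Nat.eq_dec i n) as [->|Hin]; [apply Rmax_r|].
  eapply Rle_trans; [apply IH; lia|apply Rmax_l].
Qed.

Lemma maxR_lub n f c : 0 <= c -> (forall i, (i < n)%nat -> f i <= c) -> maxR n f <= c.
Proof.
  induction n as [|n IH]; intros Hc H; simpl; [lra|].
  apply Rmax_lub; [apply IH|apply H]; auto.
Qed.

Lemma vnorm1_ge0 p a : 0 <= vnorm1 p a.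
Proof. apply sumR_ge0; intros; apply Rabs_pos. Qed.

Lemma vnorm_inf_ge0 p a : 0 <= vnorm_inf p a.
Proof. apply maxR_ge0. Qed.

Lemma mx_inf_ge0 p M : 0 <= mx_inf p M.
Proof. apply maxR_ge0. Qed.

Lemma mx_L1_ge0 p M : 0 <= mx_L1 p M.
Proof. apply maxR_ge0. Qed.

Lemma Rabs_le_vnorm_inf p a j : (j < p)%nat -> Rabs (a j) <= vnorm_inf p a.
Proof. apply (le_maxR p (fun j => Rabs (a j))). Qed.

Definition trmatvec (p : nat) (M : nat -> nat -> R) (v : nat -> R) : nat -> R :=
  fun j => sumR p (fun k => M k j * v k).

Lemma sumR_idm_l n j h : (j < n)%nat -> sumR n (fun l => idm j l * h l) = h j.
Proof.
  induction n as [|n IH]; intros Hj; [lia|]. simpl. unfold idm at 2.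
  destruct (Nat.eqb_spec j n) as [->|Hjn].
  - rewrite (sumR_ext _ _ (fun _ => 0)), sumR_0; [ring|].
    intros i Hi. unfold idm. destruct (Nat.eqb_spec n i); [lia|ring].
  - rewrite IH by lia. ring.
Qed.

Lemma matvec_matmul p A B v i :
  matvec p A (matvec p B v) i = matvec p (matmul p A B) v i.
Proof.
  unfold matvec, matmul.
  rewrite (sumR_ext _ _ (fun k => sumR p (fun m => A i k * (B k m * v m))))
    by (intros; symmetry; apply sumR_scal_l).
  rewrite sumR_swap. apply sumR_ext. intros m _.
  rewrite <- sumR_scal_r. apply sumR_ext. intros; ring.
Qed.

Lemma matvec_invK p A B v j :
  (forall i k, (i < p)%nat -> (k < p)%nat -> matmul p A B i k = idm i k) ->
  (j < p)%nat -> matvec p A (matvec p B v) j = v j.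
Proof.
  intros HAB Hj. rewrite matvec_matmul. unfold matvec at 1.
  rewrite <- (sumR_idm_l p j v Hj). apply sumR_ext. intros; rewrite HAB; auto.
Qed.

(* For symmetric [A] the identity [A B = 1] transposes to [B^T A = 1]. *)
Lemma trmatvec_inv_symK p A B v j :
  (forall i k, (i < p)%nat -> (k < p)%nat -> A i k = A k i) ->
  (forall i k, (i < p)%nat -> (k < p)%nat -> matmul p A B i k = idm i k) ->
  (j < p)%nat -> trmatvec p B (matvec p A v) j = v j.
Proof.
  intros Hsym HAB Hj. unfold trmatvec, matvec.
  rewrite (sumR_ext _ _ (fun k => sumR p (fun l => B k j * A k l * v l)))
    by (intros; rewrite <- sumR_scal_l; apply sumR_ext; intros; ring).
  rewrite sumR_swap, <- (sumR_idm_l p j v Hj). apply sumR_ext. intros l Hl.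
  replace (idm j l) with (matmul p A B l j)
    by (rewrite HAB by auto; unfold idm; rewrite Nat.eqb_sym; reflexivity).
  unfold matmul. rewrite <- sumR_scal_r. apply sumR_ext. intros k Hk.
  rewrite (Hsym l k) by auto. ring.
Qed.

Lemma matvec_vsub p M u v k : matvec p M (vsub u v) k = matvec p M u k - matvec p M v k.
Proof. unfold matvec, vsub. rewrite <- sumR_sub. apply sumR_ext; intros; ring. Qed.

Lemma matvec_msub p A B v k : matvec p (msub A B) v k = matvec p A v k - matvec p B v k.
Proof. unfold matvec, msub. rewrite <- sumR_sub. apply sumR_ext; intros; ring. Qed.

Lemma Rabs_matvec_le p M v j :
  (j < p)%nat -> Rabs (matvec p M v j) <= mx_inf p M * vnorm1 p v.
Proof.
  intros Hj. unfold matvec, vnorm1. eapply Rle_trans; [apply Rabs_sumR|].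
  rewrite <- sumR_scal_l. apply sumR_le. intros k Hk. rewrite Rabs_mult.
  apply Rmult_le_compat_r; [apply Rabs_pos|].
  eapply Rle_trans; [apply (le_maxR p (fun k => Rabs (M j k)) k Hk)|].
  apply (le_maxR p (fun j => maxR p (fun k => Rabs (M j k))) j Hj).
Qed.

Lemma Rabs_trmatvec_le p M v r j :
  0 <= r -> (forall k, (k < p)%nat -> Rabs (v k) <= r) -> (j < p)%nat ->
  Rabs (trmatvec p M v j) <= mx_L1 p M * r.
Proof.
  intros Hr Hv Hj. unfold trmatvec. eapply Rle_trans; [apply Rabs_sumR|].
  apply Rle_trans with (sumR p (fun k => Rabs (M k j)) * r).
  - rewrite <- sumR_scal_r. apply sumR_le. intros k Hk. rewrite Rabs_mult.
    apply Rmult_le_compat_l; [apply Rabs_pos|auto].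
  - apply Rmult_le_compat_r; [exact Hr|].
    apply (le_maxR p (fun k => sumR p (fun i => Rabs (M i k))) j Hj).
Qed.

Lemma Rabs_sub_le_cone t s u :
  Rabs (s - t) <= u -> Rabs (s - t) <= 2 * Rmin (Rabs t) u + Rabs s - Rabs t.
Proof.
  intros H. pose proof (Rabs_triang s (- t)) as Hs.
  pose proof (Rabs_triang (t - s) s) as Ht.
  replace (t - s + s) with t in Ht by ring.
  rewrite Rabs_Ropp in Hs. rewrite Rabs_minus_sym in Ht.
  unfold Rmin. destruct (Rle_dec (Rabs t) u); unfold Rminus in *; lra.
Qed.

Lemma Dfun_ge0 p t u : 0 <= u -> 0 <= Dfun p t u.
Proof.
  intros Hu. apply sumR_ge0. intros.
  apply Rmin_glb; [apply Rabs_pos|exact Hu].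
Qed.

Lemma vnorm1_sub_le_Dfun p x t u :
  vnorm1 p x <= vnorm1 p t -> (forall j, (j < p)%nat -> Rabs (x j - t j) <= u) ->
  vnorm1 p (vsub x t) <= 2 * Dfun p t u.
Proof.
  intros Hxt Hu.
  apply Rle_trans with (2 * Dfun p t u + vnorm1 p x - vnorm1 p t); [|lra].
  unfold vnorm1, Dfun, vsub.
  rewrite <- sumR_scal_l, <- sumR_add, <- sumR_sub.
  apply sumR_le. intros j Hj. apply Rabs_sub_le_cone, Hu, Hj.
Qed.

Lemma rpow_ge0 x y : 0 <= rpow x y.
Proof.
  unfold rpow. destruct (Req_EM_T x 0); [destruct (Req_EM_T y 0); lra|].
  left; apply exp_pos.
Qed.

Lemma rpow_0_l y : y <> 0 -> rpow 0 y = 0.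
Proof.
  intros Hy. unfold rpow.
  destruct (Req_EM_T 0 0); [|lra]. destruct (Req_EM_T y 0); [lra|reflexivity].
Qed.

Lemma rpow_pos x y : 0 < x -> rpow x y = Rpower x y.
Proof. intros Hx. unfold rpow. destruct (Req_EM_T x 0); [lra|reflexivity]. Qed.

Lemma rpow_le_compat_l x z y : 0 < y -> 0 <= x <= z -> rpow x y <= rpow z y.
Proof.
  intros Hy Hxz. destruct (Req_EM_T x 0) as [->|Hx].
  - rewrite rpow_0_l by lra. apply rpow_ge0.
  - rewrite !rpow_pos by lra. apply Rle_Rpower_l; lra.
Qed.

Lemma rpow_mult_distr x y e :
  0 <= x -> 0 <= y -> e <> 0 -> rpow (x * y) e = rpow x e * rpow y e.
Proof.
  intros Hx Hy He.
  destruct (Req_EM_T x 0) as [->|Hx0]; [rewrite Rmult_0_l, rpow_0_l by exact He; ring|].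
  destruct (Req_EM_T y 0) as [->|Hy0]; [rewrite Rmult_0_r, rpow_0_l by exact He; ring|].
  rewrite !rpow_pos by nra. symmetry; apply Rpower_mult_distr; lra.
Qed.

Lemma rpow_rpow a e1 e2 : 0 <= a -> e2 <> 0 -> rpow (rpow a e1) e2 = rpow a (e1 * e2).
Proof.
  intros Ha He2. destruct (Req_EM_T a 0) as [->|Ha0].
  - destruct (Req_EM_T e1 0) as [->|He1].
    + rewrite Rmult_0_l. unfold rpow at 2 3.
      destruct (Req_EM_T 0 0) as [_|]; [|lra].
      rewrite rpow_pos by lra. unfold Rpower. rewrite ln_1, Rmult_0_r. apply exp_0.
    + rewrite !rpow_0_l; auto with real.
  - rewrite (rpow_pos a e1), rpow_pos, rpow_pos by (try apply exp_pos; lra).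
    apply Rpower_mult.
Qed.

Lemma rpow_le_mul x a w : 1 <= w -> 0 <= x <= a -> rpow x w <= x * rpow a (w - 1).
Proof.
  intros Hw Hx. destruct (Req_EM_T x 0) as [->|Hx0].
  - rewrite rpow_0_l, Rmult_0_l by lra. lra.
  - rewrite !rpow_pos by lra.
    replace w with (1 + (w - 1)) at 1 by ring. rewrite Rpower_plus, Rpower_1 by lra.
    apply Rmult_le_compat_l; [lra|]. apply Rle_Rpower_l; lra.
Qed.

Lemma vnorm_le_interp p w c a h :
  1 <= w -> 0 <= a -> (forall j, (j < p)%nat -> Rabs (h j) <= a) -> vnorm1 p h <= c ->
  vnorm p w h <= rpow c (/ w) * rpow a (1 - / w).
Proof.
  intros Hw Ha Hh Hc.
  assert (Hw' : 0 < / w) by (apply Rinv_0_lt_compat; lra).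
  assert (Hc0 : 0 <= c) by (eapply Rle_trans; [apply vnorm1_ge0|exact Hc]).
  assert (Hsum : sumR p (fun j => rpow (Rabs (h j)) w) <= c * rpow a (w - 1)).
  { apply Rle_trans with (vnorm1 p h * rpow a (w - 1)).
    - unfold vnorm1. rewrite <- sumR_scal_r. apply sumR_le. intros j Hj.
      apply rpow_le_mul; [exact Hw|split; [apply Rabs_pos|auto]].
    - apply Rmult_le_compat_r; [apply rpow_ge0|exact Hc]. }
  unfold vnorm. eapply Rle_trans.
  { apply rpow_le_compat_l; [exact Hw'|split; [|exact Hsum]].
    apply sumR_ge0; intros; apply rpow_ge0. }
  rewrite rpow_mult_distr, rpow_rpow by (try apply rpow_ge0; lra).
  right. f_equal. f_equal. field. lra.
Qed.

Section Dantzig.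

Variables (p : nat) (Sigma Sinv Shat : nat -> nat -> R) (b bhat : nat -> R) (lam : R).
Hypothesis Hsym : forall i j, (i < p)%nat -> (j < p)%nat -> Sigma i j = Sigma j i.
Hypothesis Hinv : forall i j, (i < p)%nat -> (j < p)%nat -> matmul p Sigma Sinv i j = idm i j.

Let theta := matvec p Sinv b.

Hypothesis Hlam : vnorm1 p theta * mx_inf p (msub Shat Sigma) + vnorm_inf p (vsub bhat b) <= lam.

Lemma residual_perturbation_le eta k : (k < p)%nat ->
  Rabs ((matvec p Shat eta k - bhat k) - (matvec p Sigma eta k - b k))
  <= mx_inf p (msub Shat Sigma) * vnorm1 p eta + vnorm_inf p (vsub bhat b).
Proof.
  intros Hk.
  replace ((matvec p Shat eta k - bhat k) - (matvec p Sigma eta k - b k))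
    with (matvec p (msub Shat Sigma) eta k - vsub bhat b k)
    by (rewrite matvec_msub; unfold vsub; ring).
  eapply Rle_trans; [apply Rabs_triang|]. rewrite Rabs_Ropp.
  apply Rplus_le_compat; [apply Rabs_matvec_le|apply Rabs_le_vnorm_inf]; exact Hk.
Qed.

Lemma lam_ge0 : 0 <= lam.
Proof.
  pose proof (Rmult_le_pos _ _ (vnorm1_ge0 p theta) (mx_inf_ge0 p (msub Shat Sigma))).
  pose proof (vnorm_inf_ge0 p (vsub bhat b)). lra.
Qed.

Lemma Sigma_theta k : (k < p)%nat -> matvec p Sigma theta k = b k.
Proof. apply matvec_invK, Hinv. Qed.

Lemma theta_feasible : feasible p Shat bhat lam theta.
Proof.
  apply maxR_lub; [apply lam_ge0|]. intros k Hk.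
  pose proof (residual_perturbation_le theta k Hk) as Hpert.
  rewrite Sigma_theta, Rminus_diag, Rminus_0_r in Hpert by exact Hk.
  unfold vsub. lra.
Qed.

Section Solution.

Variable thh : nat -> R.
Hypothesis Hfeas : feasible p Shat bhat lam thh.
Hypothesis Hmin : vnorm1 p thh <= vnorm1 p theta.

Lemma Rabs_Sigma_err_le k :
  (k < p)%nat -> Rabs (matvec p Sigma (vsub thh theta) k) <= 2 * lam.
Proof.
  intros Hk. rewrite matvec_vsub, Sigma_theta by exact Hk.
  set (r := matvec p Shat thh k - bhat k).
  set (d := r - (matvec p Sigma thh k - b k)).
  assert (Hr : Rabs r <= lam).
  { eapply Rle_trans; [apply (Rabs_le_vnorm_inf p (vsub (matvec p Shat thh) bhat) k Hk)|].
    exact Hfeas. }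
  assert (Hd : Rabs d <= lam).
  { eapply Rle_trans; [apply residual_perturbation_le, Hk|].
    pose proof (Rmult_le_compat_l _ _ _ (mx_inf_ge0 p (msub Shat Sigma)) Hmin). lra. }
  replace (matvec p Sigma thh k - b k) with (r - d) by (unfold d; ring).
  eapply Rle_trans; [apply Rabs_triang|]. rewrite Rabs_Ropp. lra.
Qed.

Lemma Rabs_err_le j : (j < p)%nat -> Rabs (thh j - theta j) <= 2 * lam * mx_L1 p Sinv.
Proof.
  intros Hj. change (thh j - theta j) with (vsub thh theta j). rewrite Rmult_comm.
  rewrite <- (trmatvec_inv_symK p Sigma Sinv (vsub thh theta) j Hsym Hinv Hj).
  apply Rabs_trmatvec_le; [pose proof lam_ge0; lra|exact Rabs_Sigma_err_le|exact Hj].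
Qed.

End Solution.

End Dantzig.

(* The inverse is used only through [Sigma Sinv = 1]; with [Sigma] symmetric this
   already yields [Sinv^T Sigma = 1]. *)
Theorem mainTheorem6
  (p : nat) (Sigma Sinv Shat : nat -> nat -> R) (b bhat : nat -> R) (lam : R)
  (Hsym : forall i j, (i < p)%nat -> (j < p)%nat -> Sigma i j = Sigma j i)
  (Hinv1 : forall i j, (i < p)%nat -> (j < p)%nat -> matmul p Sigma Sinv i j = idm i j)
  (Hinv2 : forall i j, (i < p)%nat -> (j < p)%nat -> matmul p Sinv Sigma i j = idm i j)
  (Hlam : vnorm1 p (matvec p Sinv b) * mx_inf p (msub Shat Sigma)
          + vnorm_inf p (vsub bhat b) <= lam) :
  let theta := matvec p Sinv b in
  feasible p Shat bhat lam theta /\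
  (forall thh, is_solution p Shat bhat lam thh ->
     (forall w, 1 <= w ->
        vnorm p w (vsub thh theta)
        <= rpow (6 * Dfun p theta (5 * lam * mx_L1 p Sinv)) (/ w)
           * rpow (2 * lam * mx_L1 p Sinv) (1 - / w)) /\
     vnorm_inf p (vsub thh theta) <= 2 * lam * mx_L1 p Sinv).
Proof.
  intros theta.
  pose proof (theta_feasible p Sigma Sinv Shat b bhat lam Hinv1 Hlam) as Htheta.
  split; [exact Htheta|]. intros thh [Hfeas Hmin].
  pose proof (lam_ge0 p Sigma Sinv Shat b bhat lam Hlam) as Hlam0.
  pose proof (Rmult_le_pos _ _ Hlam0 (mx_L1_ge0 p Sinv)) as HlamM.
  pose proof (Rabs_err_le p Sigma Sinv Shat b bhat lam Hsym Hinv1 Hlam thh Hfeas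
    (Hmin theta Htheta)) as Herr.
  change (matvec p Sinv b) with theta in Herr.
  (* The argument gives |h|_1 <= 2 D(2 lam |Sinv|_L1); the stated constants are weaker. *)
  assert (Hl1 : vnorm1 p (vsub thh theta) <= 6 * Dfun p theta (5 * lam * mx_L1 p Sinv)).
  { assert (HD : 0 <= Dfun p theta (5 * lam * mx_L1 p Sinv)) by (apply Dfun_ge0; lra).
    enough (vnorm1 p (vsub thh theta) <= 2 * Dfun p theta (5 * lam * mx_L1 p Sinv)) by lra.
    apply vnorm1_sub_le_Dfun; [exact (Hmin theta Htheta)|].
    intros j Hj. specialize (Herr j Hj). lra. }
  split.
  - intros w Hw. apply vnorm_le_interp; [exact Hw|lra|exact Herr|exact Hl1].
  - apply maxR_lub; [lra|exact Herr].
Qed.
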